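(* Let $p,q$ be distinct primes and $N=p+q$. Let $M=(m_{ik})_{i,k\in\mathbb Z/N\mathbb Z}$ be an $N\times N$ matrix with entries in $\mathbb Z/pq\mathbb Z$ such that $(e^{2\pi i\,m_{ik}/pq})$ is a complex Hadamard matrix. For $i\in\mathbb Z/N\mathbb Z$ let $L_i(k)=m_{ik}$ and for $i,j$ let $L_{ij}=L_j-L_i:\mathbb Z/N\mathbb Z\to\mathbb Z/pq\mathbb Z$. Then for all distinct $i,j\in\mathbb Z/N\mathbb Z$ there exist a partition $\mathbb Z/N\mathbb Z=P_{ij}\sqcup Q_{ij}\sqcup R_{ij}$ and $r\in\mathbb Z/pq\mathbb Z$ such that: (i) $\#R_{ij}=2$ and $L_{ij}(k)=r$ for all $k\in R_{ij}$; (ii) $\#P_{ij}=p-1$ and $\{L_{ij}(k):k\in P_{ij}\}=(r+q(\mathbb Z/pq\mathbb Z))\setminus\{r\}$; (iii) $\#Q_{ij}=q-1$ and $\{L_{ij}(k):k\in Q_{ij}\}=(r+p(\mathbb Z/pq\mathbb Z))\setminus\{r\}$.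
   Context: A complex Hadamard matrix has all entries of modulus one and pairwise orthogonal rows. For $d\mid pq$, $d(\mathbb Z/pq\mathbb Z)$ denotes the subgroup of multiples of $d$ in $\mathbb Z/pq\mathbb Z$ (so $q(\mathbb Z/pq\mathbb Z)$ has $p$ elements and $p(\mathbb Z/pq\mathbb Z)$ has $q$ elements). *)

From HB Require Import structures.
From mathcomp Require Import all_boot all_order all_algebra all_field.
Set Implicit Arguments. Unset Strict Implicit. Unset Printing Implicit Defensive.
Import Order.TTheory GRing.Theory Num.Theory.
Local Open Scope ring_scope.

Definition complex_hadamard (n : nat) (H : 'M[algC]_n) : Prop :=
  (forall i j, `|H i j| = 1) /\
  (forall i j, i != j -> \sum_k H i k * (H j k)^* = 0).

(* The matrix (z^{m_ik}) for M with entries in Z/dZ, with z a primitive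
   d-th root of unity (playing the role of e^{2 pi i / d}). *)
Definition exp_mx (d n : nat) (z : algC) (M : 'M['Z_d]_n) : 'M[algC]_n :=
  \matrix_(i, k) z ^+ (nat_of_ord (M i k)).

Definition Ldiff (d n : nat) (M : 'M['Z_d]_n) (i j : 'I_n) : 'I_n -> 'Z_d :=
  fun k => M j k - M i k.

Definition coset_mult (d : nat) (c : nat) (r : 'Z_d) : {set 'Z_d} :=
  [set r + (c%:R * x) | x : 'Z_d].

From HB Require Import structures.
From mathcomp Require Import all_boot all_order all_algebra all_field.
From mathcomp Require Import zify.
Set Implicit Arguments. Unset Strict Implicit. Unset Printing Implicit Defensive.
Import Order.TTheory GRing.Theory Num.Theory.
Local Open Scope ring_scope.

(* Let n = pq and L : I -> Z/nZ with sum_k z^(L k) = 0 for a primitive n-th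
   root of unity z; value_mult L a counts the k with L k = a.
   (1) Galois invariance: the power sum sum_k z^(e L k) vanishes whenever e is
       coprime to n, since z^e is then another primitive n-th root.
   (2) Fourier inversion recovers n * value_mult L a from the power sums with
       e < n.  When p | e (resp. q | e) the Fourier kernel only sees a modulo q
       (resp. p), so with mix a b the element congruent to a mod p and to b
       mod q, the multiplicity satisfies the rectangle identity
         mult a + mult b = mult (mix a b) + mult (mix b a).
   (3) Such a nat-valued function is g (a mod p) + h (a mod q); a total mass
       p + q forces q * sum g + p * sum h = p + q, hence sum g = sum h = 1 and
       mult a = [a = r mod p] + [a = r mod q] for some r.
   (4) For L = L_ij, whose power sum vanishes by orthogonality of rows i and j,
       this describes the fibres of L_ij: r is taken twice, every other element
       of r + q(Z/pqZ) and of r + p(Z/pqZ) exactly once. *)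

(* A vanishing sum of powers of a primitive n-th root of unity vanishes for
   every primitive n-th root: both have the n-th cyclotomic polynomial as
   rational minimal polynomial. *)
Lemma prim_root_vanishing_sum n (I : finType) (E : I -> nat) (z z' : algC) :
  n.-primitive_root z -> n.-primitive_root z' ->
  \sum_k z ^+ E k = 0 -> \sum_k z' ^+ E k = 0.
Proof.
move=> pz pz' s0; pose f : {poly rat} := \sum_k 'X^(E k).
have [m [Dm _ rootm]] := minCpolyP z; have [m' [Dm' _ rootm']] := minCpolyP z'.
set g := map_poly _ in Dm rootm Dm' rootm'.
have evalf w : (g f).[w] = \sum_k w ^+ E k.
  rewrite /f (big_morph g (raddfD _) (raddf0 _)) horner_sum.
  by apply: eq_bigr => k _; rewrite /g map_polyXn hornerXn.
have mm' : m = m'.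
  apply: map_poly_inj; apply: (etrans (esym Dm)); apply: (etrans _ Dm').
  rewrite (minCpoly_cyclotomic pz) (minCpoly_cyclotomic pz').
  by rewrite -(Cintr_Cyclotomic pz) -(Cintr_Cyclotomic pz').
have : root (g f) z by rewrite /root evalf s0.
by rewrite rootm mm' -rootm' /root evalf => /eqP.
Qed.

Lemma geometric_sum_root (R : idomainType) (w : R) m : w ^+ m = 1 ->
  \sum_(e < m) w ^+ e = if w == 1 then m%:R else 0.
Proof.
move=> wm; case: eqP => [->|/eqP w_neq1].
  by under eq_bigr do rewrite expr1n; rewrite sumr_const card_ord.
have : (w - 1) * \sum_(e < m) w ^+ e = 0 by rewrite -subrX1 wm subrr.
by move/eqP; rewrite mulf_eq0 subr_eq0 (negbTE w_neq1) => /eqP.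
Qed.

Lemma sum_nat_eq1 (d : nat) (g : nat -> nat) : (\sum_(x < d) g x = 1)%N ->
  exists2 x1, (x1 < d)%N & forall x, (x < d)%N -> g x = (x == x1).
Proof.
move=> s1; case: (pickP (fun x : 'I_d => 0 < g x)%N) => [x1 gx1 | g0]; last first.
  by move: s1; rewrite big1 // => i _; move/negbT: (g0 i); rewrite lt0n negbK => /eqP.
move: s1; rewrite (bigD1 x1) //= => s1.
have g1 : g x1 = 1%N by move: gx1; lia.
have : (\sum_(i < d | i != x1) g i == 0)%N by rewrite -(eqn_add2l (g x1)) s1 g1.
rewrite sum_nat_eq0 => /forallP rest0.
exists (val x1) => [|x xd]; first exact: ltn_ord.
case: (eqVneq x (val x1)) => [-> //|ne].
by apply/eqP; have /implyP := rest0 (Ordinal xd); apply; apply: contra ne => /eqP <-.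
Qed.

Section ZmodFacts.
Variable n : nat.
Hypothesis n_gt1 : (1 < n)%N.
Local Notation T := 'Z_n.

Lemma Zn_val_lt (a : T) : (val a < n)%N.
Proof. by case: a => m hm /=; rewrite -(Zp_cast n_gt1). Qed.

Lemma Zn_val_natr m : val (m%:R : T) = (m %% n)%N.
Proof. exact: val_Zp_nat. Qed.

Lemma Zn_valB (a b : T) : val (a - b) = ((val a + (n - val b)) %% n)%N.
Proof.
rewrite -Zn_val_natr natrD natrB; last exact: ltnW (Zn_val_lt b).
by rewrite pchar_Zp // sub0r !natr_Zp.
Qed.

Lemma sum_Zn_mod d e (g : nat -> nat) : (d * e)%N = n -> (0 < d)%N ->
  (\sum_(a : T) g (val a %% d) = e * \sum_(x < d) g x)%N.
Proof.
move=> de d_gt0.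
have -> : (\sum_(a : T) g (val a %% d) = \sum_(0 <= i < d * e) g (i %% d))%N.
  by rewrite de -(Zp_cast n_gt1) big_mkord.
rewrite mulnC; elim: e {de} => [|e IH]; first by rewrite big_geq.
rewrite mulSn (big_cat_nat _ (leq_addl _ _)) //= IH mulSn addnC; congr (_ + _)%N.
rewrite -{1}(add0n (e * d)%N) big_addn addnK big_mkord; apply: eq_bigr => i _.
by rewrite addnC modnMDl modn_small.
Qed.

Lemma coset_multE d (r a : T) : (d %| n)%N ->
  (a \in coset_mult d r) = (val a == val r %[mod d]).
Proof.
move=> dn; have r_le := ltnW (Zn_val_lt r).
apply/imsetP/idP => [[x _ ->]|ar].
  have -> : r + d%:R * x = (val r + d * val x)%:R by rewrite natrD natrM !natr_Zp.
  rewrite Zn_val_natr (modn_dvdm _ dn).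
  by rewrite addnC mulnC modnMDl.
have dv : (d %| val a + (n - val r))%N.
  rewrite /dvdn -modnDml (eqP ar) modnDml subnKC //; exact: dn.
exists ((val a + (n - val r)) %/ d)%:R => //.
rewrite -natrM mulnC (divnK dv) -{1}(natr_Zp r) -natrD addnCA subnKC //.
by rewrite natrD pchar_Zp // addr0 natr_Zp.
Qed.

Lemma card_coset_mult d e (r : T) : (d * e)%N = n -> (0 < d)%N ->
  #|coset_mult d r| = e.
Proof.
move=> de d_gt0; have dn : (d %| n)%N by rewrite -de dvdn_mulr.
rewrite -sum1_card big_mkcond /=.
under eq_bigr do rewrite coset_multE //.
rewrite (sum_Zn_mod (fun x => nat_of_bool (x == val r %% d)%N) de d_gt0).
rewrite (bigD1 (Ordinal (ltn_pmod (val r) d_gt0))) //= eqxx big1 ?addn0 ?muln1 //.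
by move=> x ne; apply/eqP; rewrite eqb0; apply: contra ne => /eqP ex; apply/eqP/val_inj.
Qed.

End ZmodFacts.

Section PowerSums.
Variables (n : nat) (z : algC).
Hypotheses (n_gt1 : (1 < n)%N) (hz : n.-primitive_root z).
Variables (I : finType) (L : I -> 'Z_n).

Definition value_mult (a : 'Z_n) : nat := #|[set k | L k == a]|.
Definition power_sum (e : nat) : algC := \sum_k (z ^+ e) ^+ val (L k).

Lemma sum_value_mult : (\sum_a value_mult a = #|I|)%N.
Proof.
rewrite -sum1_card (partition_big L xpredT) //=; apply: eq_bigr => a _.
by rewrite /value_mult -sum1_card; apply: eq_bigl => k; rewrite inE.
Qed.

Lemma prim_root_neq0 : z != 0.
Proof.
apply/eqP => z0; have := prim_expr_order hz.
by rewrite z0 expr0n gtn_eqF ?(ltnW n_gt1) // => /eqP; rewrite eq_sym oner_eq0.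
Qed.

Lemma prim_expr_Zn_sub (a b : 'Z_n) : z ^+ val (a - b) = z ^+ val a / z ^+ val b.
Proof.
have zb : z ^+ val b != 0 := expf_neq0 _ prim_root_neq0.
rewrite Zn_valB // (prim_expr_mod hz) exprD; congr (_ * _).
apply: (mulIf zb); rewrite mulVf // -exprD subnK ?(prim_expr_order hz) //.
exact/ltnW/Zn_val_lt.
Qed.

Lemma fourier_value_mult (a : 'Z_n) :
  \sum_(e < n) power_sum e / z ^+ (e * val a) = n%:R * (value_mult a)%:R.
Proof.
have za : z ^+ val a != 0 := expf_neq0 _ prim_root_neq0.
rewrite /power_sum; under eq_bigr do rewrite mulr_suml.
rewrite exchange_big /=.
transitivity (\sum_k if L k == a then n%:R else 0 : algC); last first.
  by rewrite -big_mkcond /= sumr_const mulr_natr /value_mult cardsE.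
apply: eq_bigr => k _.
have unit_n m : z ^+ (m * n) = 1 by rewrite mulnC exprM (prim_expr_order hz) expr1n.
rewrite (eq_bigr (fun e : 'I_n => (z ^+ val (L k) / z ^+ val a) ^+ e)); last first.
  by move=> e _; rewrite exprMn exprVn -!exprM (mulnC e) (mulnC e).
rewrite geometric_sum_root; last by rewrite exprMn exprVn -!exprM !unit_n invr1 mulr1.
congr (if _ then _ else _); apply/idP/idP => [/eqP/divr1_eq/eqP|/eqP ->]; last first.
  by rewrite divff.
by rewrite (eq_prim_root_expr hz) !modn_small ?Zn_val_lt.
Qed.

Lemma power_sum_coprime e : \sum_k z ^+ val (L k) = 0 -> coprime e n ->
  power_sum e = 0.
Proof.
move=> s0 en; apply: (prim_root_vanishing_sum hz) s0.
by rewrite prim_root_exp_coprime.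
Qed.

Lemma prim_expr_mul_congr d d' e x y : (d * d')%N = n -> (d %| e)%N ->
  x = y %[mod d'] -> z ^+ (e * x) = z ^+ (e * y).
Proof.
move=> dd /dvdnP [e' ->] xy; apply/eqP; rewrite (eq_prim_root_expr hz) -dd.
rewrite (mulnC e' d) -!mulnA -!muln_modr; apply/eqP; congr (_ * _)%N.
by rewrite -modnMmr xy modnMmr.
Qed.

End PowerSums.

Section CosetFibers.
Variables (n : nat) (I : finType) (L : I -> 'Z_n) (r : 'Z_n).
Variables (d e : nat) (de : (d * e)%N = n) (d_gt0 : (0 < d)%N).
Hypothesis n_gt1 : (1 < n)%N.
Hypothesis multE :
  forall a, value_mult L a = ((val a == val r %[mod d]) + (val a == val r %[mod e]))%N.
Hypothesis r_unique :
  forall a : 'Z_n, val a == val r %[mod d] -> val a == val r %[mod e] -> a = r.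

Definition coset_fiber : {set I} :=
  [set k | (val (L k) == val r %[mod d]) && (L k != r)].

Lemma value_mult_coset a : val a == val r %[mod d] -> a != r -> value_mult L a = 1%N.
Proof.
move=> ad a_neq_r; rewrite multE ad; case ae: (val a == val r %[mod e]) => //.
by rewrite (r_unique ad ae) eqxx in a_neq_r.
Qed.

Lemma coset_fiber_image : L @: coset_fiber = coset_mult d r :\ r.
Proof.
have dn : (d %| n)%N by rewrite -de dvdn_mulr.
apply/setP => a; rewrite in_setD1 coset_multE //.
apply/imsetP/andP => [[k] | [a_neq_r ad]].
  by rewrite inE => /andP [kd k_neq_r] ->.
have /card_gt0P [k] : (0 < value_mult L a)%N by rewrite value_mult_coset.
by rewrite inE => /eqP Lk; exists k; rewrite // inE Lk ad a_neq_r.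
Qed.

Lemma coset_fiber_spec :
  #|coset_fiber| = e.-1 /\ L @: coset_fiber = coset_mult d r :\ r.
Proof.
split; last exact: coset_fiber_image.
rewrite -(card_in_imset (f := L)); last first.
  move=> k k' /[!inE] /andP [kd k_neq_r] _ Lkk'.
  have /eqP /cards1P [x fibre] := value_mult_coset kd k_neq_r.
  have : k \in [set k0 | L k0 == L k] by rewrite inE.
  have : k' \in [set k0 | L k0 == L k] by rewrite inE Lkk'.
  by rewrite fibre !inE => /eqP -> /eqP ->.
have r_in : r \in coset_mult d r by rewrite coset_multE // -de dvdn_mulr.
have := cardsD1 r (coset_mult d r).
by rewrite coset_fiber_image r_in (card_coset_mult n_gt1 r de d_gt0) => ->.
Qed.

End CosetFibers.

Section TwoPrimes.
Variables (p q : nat) (pp : prime p) (pq : prime q) (hpq : p != q).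
Local Notation n := (p * q)%N.
Local Notation T := 'Z_(p * q).

Lemma pq_gt1 : (1 < n)%N.
Proof. by rewrite (leq_trans (prime_gt1 pp)) // leq_pmulr // prime_gt0. Qed.

Lemma coprime_pq : coprime p q.
Proof. by rewrite prime_coprime // dvdn_prime2. Qed.

Lemma Zpq_eq (a b : T) : val a = val b %[mod p] -> val a = val b %[mod q] -> a = b.
Proof.
move=> ab_p ab_q; apply/val_inj/eqP.
have := chinese_remainder coprime_pq (val a) (val b).
by rewrite ab_p ab_q !eqxx !modn_small ?(Zn_val_lt pq_gt1).
Qed.

Definition crt (x y : nat) : T := (chinese p q x y)%:R.

Lemma crt_modp x y : val (crt x y) = x %[mod p].
Proof.
rewrite Zn_val_natr ?pq_gt1 // (modn_dvdm _ (dvdn_mulr q (dvdnn p))).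
exact: chinese_modl coprime_pq _ _.
Qed.

Lemma crt_modq x y : val (crt x y) = y %[mod q].
Proof.
rewrite Zn_val_natr ?pq_gt1 // (modn_dvdm _ (dvdn_mull p (dvdnn q))).
exact: chinese_modr coprime_pq _ _.
Qed.

Lemma crt_congr x x' y y' : x = x' %[mod p] -> y = y' %[mod q] -> crt x y = crt x' y'.
Proof. by move=> xx' yy'; apply: Zpq_eq; rewrite !(crt_modp, crt_modq). Qed.

Definition mix (a b : T) : T := crt (val a) (val b).

Lemma mix_modp a b : val (mix a b) = val a %[mod p].
Proof. exact: crt_modp. Qed.

Lemma mix_modq a b : val (mix a b) = val b %[mod q].
Proof. exact: crt_modq. Qed.

(* The second part
   is normalised by the minimum of c on the multiples of p, so that it stays
   nonnegative. *)
Lemma mix_additive_split (c : T -> nat)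
    (c_mix : forall a b, (c a + c b = c (mix a b) + c (mix b a))%N) :
  exists g h : nat -> nat, forall a, (c a = g (val a %% p) + h (val a %% q))%N.
Proof.
have [b0 _ min_b0] := @arg_minnP T 0 xpredT (fun b => c (crt 0 (val b))) isT.
set m := c (crt 0 (val b0)) in min_b0 *.
exists (fun x => c (crt x (val b0))), (fun y => c (crt 0 y) - m)%N => a.
have mix_l : mix a (crt 0 (val b0)) = crt (val a %% p) (val b0).
  by apply: crt_congr; rewrite ?modn_mod ?crt_modq.
have mix_r : mix (crt 0 (val b0)) a = crt 0 (val a).
  by apply: crt_congr; rewrite ?crt_modp.
have -> : crt 0 (val a %% q)%N = crt 0 (val a) by apply: crt_congr; rewrite ?modn_mod.
have := c_mix a (crt 0 (val b0)); rewrite mix_l mix_r -/m => E.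
by rewrite addnBA ?min_b0 // -E addnK.
Qed.

Lemma two_primes_nat_eq (V W : nat) : (q * V + p * W = p + q)%N -> V = 1%N /\ W = 1%N.
Proof.
have p_gt1 := prime_gt1 pp; have q_gt1 := prime_gt1 pq.
have p_ndvd_q : ~~ (p %| q)%N by rewrite dvdn_prime2.
have q_ndvd_p : ~~ (q %| p)%N by rewrite dvdn_prime2 // eq_sym.
case: V => [|[|V]] E.
- by case/negP: p_ndvd_q; rewrite -(dvdn_addr _ (dvdnn p)) -E muln0 dvdn_mulr.
- by split=> //; apply/eqP; rewrite -(eqn_pmul2l (ltnW p_gt1)) muln1; apply/eqP; lia.
- case: W E => [|W] E; last by lia.
  by case/negP: q_ndvd_p; rewrite -(dvdn_addl _ (dvdnn q)) -E muln0 addn0 dvdn_mulr.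
Qed.

Lemma mix_additive_two_cosets (c : T -> nat)
    (c_mix : forall a b, (c a + c b = c (mix a b) + c (mix b a))%N)
    (c_sum : (\sum_a c a = p + q)%N) :
  exists r : T, forall a : T,
    c a = ((val a == val r %[mod p]) + (val a == val r %[mod q]))%N.
Proof.
have [g [h cE]] := mix_additive_split c_mix.
have : (q * \sum_(x < p) g x + p * \sum_(y < q) h y = p + q)%N.
  rewrite -(sum_Zn_mod pq_gt1 g (erefl _) (prime_gt0 pp)).
  rewrite -(sum_Zn_mod pq_gt1 h (mulnC q p) (prime_gt0 pq)) -big_split /=.
  by rewrite -c_sum; apply: eq_bigr => a _; rewrite cE.
move=> /two_primes_nat_eq [/sum_nat_eq1 [x1 x1_lt gE] /sum_nat_eq1 [y1 y1_lt hE]].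
exists (crt x1 y1) => a; rewrite cE gE ?hE ?ltn_pmod ?prime_gt0 //.
by rewrite crt_modp crt_modq (modn_small x1_lt) (modn_small y1_lt).
Qed.

(* Applied to the value multiplicities of L with sum_k z^(L k) = 0: the power
   sums with p | e (resp. q | e) only see residues mod q (resp. p), and the
   others vanish, so each Fourier coefficient is rectangle-additive. *)
Lemma value_mult_mix_additive (z : algC) (hz : n.-primitive_root z)
    (I : finType) (L : I -> T) :
  \sum_k z ^+ val (L k) = 0 -> forall a b,
  (value_mult L a + value_mult L b = value_mult L (mix a b) + value_mult L (mix b a))%N.
Proof.
move=> s0 a b; pose coef e (c : T) := power_sum z L e / z ^+ (e * val c).
have coef_mix (e : 'I_n) : coef e a + coef e b = coef e (mix a b) + coef e (mix b a).
  have [en|] := boolP (coprime e n).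
    by rewrite /coef !power_sum_coprime // !mul0r addr0.
  rewrite coprimeMr !(coprime_sym e) !prime_coprime // negb_and !negbK.
  case/orP => [pe|qe]; rewrite /coef.
    rewrite -(prim_expr_mul_congr hz (erefl n) pe (mix_modq b a)).
    by rewrite -(prim_expr_mul_congr hz (erefl n) pe (mix_modq a b)) addrC.
  rewrite -(prim_expr_mul_congr hz (mulnC q p) qe (mix_modp a b)).
  by rewrite -(prim_expr_mul_congr hz (mulnC q p) qe (mix_modp b a)).
have : n%:R * (value_mult L a + value_mult L b)%:R
     = n%:R * (value_mult L (mix a b) + value_mult L (mix b a))%:R :> algC.
  rewrite !natrD !mulrDr -!(fourier_value_mult pq_gt1 hz) -!big_split /=.
  by apply: eq_bigr => e _; apply: coef_mix.
by move/(mulfI _)/eqP; rewrite pnatr_eq0 eqr_nat gtn_eqF ?(ltnW pq_gt1) // => /(_ isT)/eqP.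
Qed.

Lemma coset_fibers_partition (I : finType) (L : I -> T) (r : T)
    (multE : forall a,
       value_mult L a = ((val a == val r %[mod p]) + (val a == val r %[mod q]))%N) :
  let P := coset_fiber L r q in let Q := coset_fiber L r p in
  let R := [set k | L k == r] in
  [/\ [disjoint P & Q], [disjoint P & R], [disjoint Q & R] & P :|: Q :|: R = setT].
Proof.
move=> P Q R.
have no_both k : val (L k) == val r %[mod p] -> val (L k) == val r %[mod q] -> L k = r.
  by move=> /eqP kp /eqP kq; apply: Zpq_eq.
have disjointI (A B : {set I}) : (forall k, k \in A -> k \in B -> False) ->
    [disjoint A & B].
  move=> AB; rewrite -setI_eq0; apply/eqP/setP => k; rewrite !inE.
  by apply/idP => /andP [kA kB]; case: (AB k kA kB).
split.
- apply: disjointI => k /[!inE] /andP [kq k_neq_r] /andP [kp _].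
  by rewrite (no_both k kp kq) eqxx in k_neq_r.
- by apply: disjointI => k /[!inE] /andP [_ /negP k_neq_r].
- by apply: disjointI => k /[!inE] /andP [_ /negP k_neq_r].
- apply/setP => k; rewrite !inE.
  have : (0 < value_mult L (L k))%N by apply/card_gt0P; exists k; rewrite inE.
  rewrite multE; case: (L k == r); rewrite ?orbT // !andbT orbC.
  by case: (val (L k) == val r %[mod p]); case: (val (L k) == val r %[mod q]).
Qed.

End TwoPrimes.

(* Orthogonality of rows i and j of the Hadamard matrix (z^(m_ik)) says that
   the power sum of L_ij vanishes: conjugating a unit-modulus entry inverts it. *)
Lemma hadamard_Ldiff_sum n m (n_gt1 : (1 < n)%N) (z : algC)
    (hz : n.-primitive_root z) (M : 'M['Z_n]_m) (hH : complex_hadamard (exp_mx z M))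
    (i j : 'I_m) :
  i != j -> \sum_k z ^+ val (Ldiff M i j k) = 0.
Proof.
have [unit_entries orth_rows] := hH.
rewrite eq_sym => ji; rewrite -[RHS](orth_rows j i ji); apply: eq_bigr => k _.
have := unit_entries i k; rewrite !mxE (prim_expr_Zn_sub n_gt1 hz) => unit_ik.
by rewrite invC_norm unit_ik expr1n invr1 mul1r.
Qed.

Theorem lemma6p1 (p q : nat) (pp : prime p) (pq : prime q) (hpq : p != q)
  (z : algC) (hz : (p * q).-primitive_root z)
  (M : 'M['Z_(p * q)]_(p + q))
  (hH : complex_hadamard (exp_mx z M)) :
  forall i j : 'I_(p + q), i != j ->
  exists (P Q R : {set 'I_(p + q)}) (r : 'Z_(p * q)),
    [/\ [/\ [disjoint P & Q], [disjoint P & R], [disjoint Q & R]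
           & P :|: Q :|: R = setT],
        #|R| = 2%N /\ (forall k, k \in R -> Ldiff M i j k = r),
        #|P| = p.-1 /\ Ldiff M i j @: P = coset_mult q r :\ r
      & #|Q| = q.-1 /\ Ldiff M i j @: Q = coset_mult p r :\ r].
Proof.
move=> i j ij; set L := Ldiff M i j.
have n_gt1 := pq_gt1 pp pq.
have s0 : \sum_k z ^+ val (L k) = 0 := hadamard_Ldiff_sum n_gt1 hz hH ij.
have [r multE] : exists r : 'Z_(p * q), forall a, value_mult L a =
    ((val a == val r %[mod p]) + (val a == val r %[mod q]))%N.
  apply: (mix_additive_two_cosets pp pq hpq (value_mult_mix_additive pp pq hpq hz s0)).
  by rewrite sum_value_mult card_ord.
have r_unique a : val a == val r %[mod p] -> val a == val r %[mod q] -> a = r.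
  by move=> /eqP ap /eqP aq; apply: Zpq_eq.
exists (coset_fiber L r q), (coset_fiber L r p), [set k | L k == r], r.
split.
- exact: coset_fibers_partition.
- by split=> [|k /[!inE] /eqP //]; rewrite -[LHS]/(value_mult L r) multE !eqxx.
- apply: (coset_fiber_spec (e := p)) (mulnC q p) (prime_gt0 pq) n_gt1 _ _.
    by move=> a; rewrite multE addnC.
  by move=> a aq ap; apply: r_unique.
- exact: (coset_fiber_spec (e := q)) (erefl _) (prime_gt0 pp) n_gt1 multE r_unique.
Qed.
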